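(* Let $\mathcal C$ be a left autonomous monoidal category and $T$ a bimonad on $\mathcal C$. The following are equivalent: (i) $T$ has a left unary antipode; (ii) $T$ has a left binary antipode; (iii) $T$ is a left Hopf monad. (The analogous statement holds for right autonomous categories, right unary/binary antipodes and right Hopf monads.)
   Context: Monoidal categories are strict. A bimonad on $\mathcal C$ is a monad $(T,\mu,\eta)$ with comonoidal structure $T_2(X,Y)\colon T(X\otimes Y)\to TX\otimes TY$, $T_0\colon T\mathbb 1\to\mathbb 1$ such that $\mu,\eta$ are comonoidal. $T$ is a left Hopf monad if $H^l_{X,Y}=(TX\otimes\mu_Y)T_2(X,TY)\colon T(X\otimes TY)\to TX\otimes TY$ is invertible for all $X,Y$. Left autonomous: every $X$ has a left dual ${}^\vee X$ with $\mathrm{ev}_X\colon{}^\vee X\otimes X\to\mathbb 1$, $\mathrm{coev}_X\colon\mathbb 1\to X\otimes{}^\vee X$; ${}^\vee f$ denotes the dual morphism. Such a category is left closed with $[X,Y]^l=Y\otimes{}^\vee X$, evaluation $\mathrm{ev}^X_Y=Y\otimes\mathrm{ev}_X$, and coevaluation $\mathrm{coev}^X_Y=Y\otimes\mathrm{coev}_X$. A left unary antipode is a natural transformation $\mathfrak s^l_X\colon T({}^\vee TX)\to{}^\vee X$ with $T_0T(\mathrm{ev}_X)T({}^\vee\eta_X\otimes X)=\mathrm{ev}_{TX}(\mathfrak s^l_{TX}T({}^\vee\mu_X)\otimes TX)T_2({}^\vee TX,X)$ and $(\eta_X\otimes{}^\vee X)\mathrm{coev}_XT_0=(\mu_X\otimes\mathfrak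 s^l_X)T_2(TX,{}^\vee TX)T(\mathrm{coev}_{TX})$. A left binary antipode is a natural transformation $s^l_{X,Y}\colon T[TX,Y]^l\to[X,TY]^l$ with (1) $T\big(\mathrm{ev}^X_Y([\eta_X,Y]^l\otimes X)\big)=\mathrm{ev}^{TX}_{TY}\big(s^l_{TX,Y}T[\mu_X,Y]^l\otimes TX\big)T_2([TX,Y]^l,X)$; (2) $[X,TY\otimes\eta_X]^l\,\mathrm{coev}^X_{TY}=[X,(TY\otimes\mu_X)T_2(Y,TX)]^l\,s^l_{X,Y\otimes TX}\,T(\mathrm{coev}^{TX}_Y)$. *)

(* Categories are encoded "arrows-only": one type of objects, one type of all
   morphisms with domain/codomain maps, and a total composition whose laws are
   only required on composable pairs.  This makes strictness of the monoidal
   structure an equality of objects, with no transports. *)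

Record Category := {
  ob : Type;
  hom : Type;
  dom : hom -> ob;
  cod : hom -> ob;
  idm : ob -> hom;
  comp : hom -> hom -> hom;               (* comp g f = g o f *)
  dom_idm : forall X, dom (idm X) = X;
  cod_idm : forall X, cod (idm X) = X;
  dom_comp : forall g f, dom g = cod f -> dom (comp g f) = dom f;
  cod_comp : forall g f, dom g = cod f -> cod (comp g f) = cod g;
  comp_idl : forall f, comp (idm (cod f)) f = f;
  comp_idr : forall f, comp f (idm (dom f)) = f;
  comp_assoc : forall h g f, dom h = cod g -> dom g = cod f ->
      comp h (comp g f) = comp (comp h g) f }.

Arguments dom {_} _. Arguments cod {_} _. Arguments idm {_} _.
Arguments comp {_} _ _.

Record SMCat := {
  cat :> Category;
  tob : ob cat -> ob cat -> ob cat;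
  thom : hom cat -> hom cat -> hom cat;
  unit_ob : ob cat;
  dom_thom : forall f g, dom (thom f g) = tob (dom f) (dom g);
  cod_thom : forall f g, cod (thom f g) = tob (cod f) (cod g);
  thom_id : forall X Y, thom (idm X) (idm Y) = idm (tob X Y);
  thom_comp : forall g f g' f', dom g = cod f -> dom g' = cod f' ->
      thom (comp g f) (comp g' f') = comp (thom g g') (thom f f');
  tob_assoc : forall X Y Z, tob (tob X Y) Z = tob X (tob Y Z);
  thom_assoc : forall f g h, thom (thom f g) h = thom f (thom g h);
  tob_unitl : forall X, tob unit_ob X = X;
  tob_unitr : forall X, tob X unit_ob = X;
  thom_unitl : forall f, thom (idm unit_ob) f = f;
  thom_unitr : forall f, thom f (idm unit_ob) = f }.

Arguments tob {_} _ _. Arguments thom {_} _ _. Arguments unit_ob {_}.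

Record Functor (C : Category) := {
  Fob : ob C -> ob C;
  Fhom : hom C -> hom C;
  F_dom : forall f, dom (Fhom f) = Fob (dom f);
  F_cod : forall f, cod (Fhom f) = Fob (cod f);
  F_id : forall X, Fhom (idm X) = idm (Fob X);
  F_comp : forall g f, dom g = cod f -> Fhom (comp g f) = comp (Fhom g) (Fhom f) }.

Arguments Fob {_} _ _. Arguments Fhom {_} _ _.

Definition is_hom {C : Category} (f : hom C) (X Y : ob C) : Prop :=
  dom f = X /\ cod f = Y.

Section Defs.
Variable C : SMCat.

Local Notation "g ∘ f" := (comp g f) (at level 41, left associativity).
Local Notation "f ⊗ g" := (thom f g) (at level 31, left associativity).
Local Notation "X ⊠ Y" := (tob X Y) (at level 31, left associativity).
Local Notation "1" := (@unit_ob C).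
Local Notation id := idm.

Record LeftAutonomous := {
  ldual : ob C -> ob C;
  lev : ob C -> hom C;
  lcoev : ob C -> hom C;
  lev_hom : forall X, is_hom (lev X) (ldual X ⊠ X) 1;
  lcoev_hom : forall X, is_hom (lcoev X) 1 (X ⊠ ldual X);
  zigzag1 : forall X, (id X ⊗ lev X) ∘ (lcoev X ⊗ id X) = id X;
  zigzag2 : forall X,
      (lev X ⊗ id (ldual X)) ∘ (id (ldual X) ⊗ lcoev X) = id (ldual X) }.

Variable D : LeftAutonomous.
Local Notation "∨ X" := (ldual D X) (at level 5).
Local Notation ev := (lev D).
Local Notation coev := (lcoev D).

Definition dual_hom (f : hom C) : hom C :=
  (ev (cod f) ⊗ id (∨ (dom f)))
  ∘ (id (∨ (cod f)) ⊗ f ⊗ id (∨ (dom f)))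
  ∘ (id (∨ (cod f)) ⊗ coev (dom f)).

(* left internal hom [X,Y]^l = Y ⊗ ∨X, with its action on morphisms
   [f,g]^l = g ⊗ ∨f : [X,Y] -> [X',Y'] for f : X' -> X, g : Y -> Y' *)
Definition lihom (X Y : ob C) : ob C := Y ⊠ ∨ X.
Definition lihom_map (f g : hom C) : hom C := g ⊗ dual_hom f.
Definition ev_int (X Y : ob C) : hom C := id Y ⊗ ev X.
Definition coev_int (X Y : ob C) : hom C := id Y ⊗ coev X.

End Defs.

Section Bimonads.
Variable C : SMCat.
Local Notation "g ∘ f" := (comp g f) (at level 41, left associativity).
Local Notation "f ⊗ g" := (thom f g) (at level 31, left associativity).
Local Notation "X ⊠ Y" := (tob X Y) (at level 31, left associativity).
Local Notation "1" := (@unit_ob C).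
Local Notation id := idm.

Variable T : Functor C.
Local Notation TO := (Fob T).
Local Notation TH := (Fhom T).

Record is_bimonad (mu eta : ob C -> hom C) (T2 : ob C -> ob C -> hom C)
    (T0 : hom C) : Prop := {
  mu_hom : forall X, is_hom (mu X) (TO (TO X)) (TO X);
  eta_hom : forall X, is_hom (eta X) X (TO X);
  T2_hom : forall X Y, is_hom (T2 X Y) (TO (X ⊠ Y)) (TO X ⊠ TO Y);
  T0_hom : is_hom T0 (TO 1) 1;
  mu_nat : forall f, mu (cod f) ∘ TH (TH f) = TH f ∘ mu (dom f);
  eta_nat : forall f, eta (cod f) ∘ f = TH f ∘ eta (dom f);
  T2_nat : forall f g,
      T2 (cod f) (cod g) ∘ TH (f ⊗ g) = (TH f ⊗ TH g) ∘ T2 (dom f) (dom g);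
  monad_assoc : forall X, mu X ∘ TH (mu X) = mu X ∘ mu (TO X);
  monad_unitl : forall X, mu X ∘ eta (TO X) = id (TO X);
  monad_unitr : forall X, mu X ∘ TH (eta X) = id (TO X);
  comon_coassoc : forall X Y Z,
      (T2 X Y ⊗ id (TO Z)) ∘ T2 (X ⊠ Y) Z = (id (TO X) ⊗ T2 Y Z) ∘ T2 X (Y ⊠ Z);
  comon_counitl : forall X, (T0 ⊗ id (TO X)) ∘ T2 1 X = id (TO X);
  comon_counitr : forall X, (id (TO X) ⊗ T0) ∘ T2 X 1 = id (TO X);
  mu_comon2 : forall X Y,
      T2 X Y ∘ mu (X ⊠ Y) = (mu X ⊗ mu Y) ∘ T2 (TO X) (TO Y) ∘ TH (T2 X Y);
  mu_comon0 : T0 ∘ mu 1 = T0 ∘ TH T0;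
  eta_comon2 : forall X Y, T2 X Y ∘ eta (X ⊠ Y) = eta X ⊗ eta Y;
  eta_comon0 : T0 ∘ eta 1 = id 1 }.

End Bimonads.

Record Bimonad (C : SMCat) := {
  BT : Functor C;
  Bmu : ob C -> hom C;
  Beta : ob C -> hom C;
  BT2 : ob C -> ob C -> hom C;
  BT0 : hom C;
  Bax : is_bimonad C BT Bmu Beta BT2 BT0 }.

Arguments BT {_} _. Arguments Bmu {_} _ _. Arguments Beta {_} _ _.
Arguments BT2 {_} _ _ _. Arguments BT0 {_} _.

Section Antipodes.
Variable C : SMCat.
Variable D : LeftAutonomous C.
Variable B : Bimonad C.
Local Notation "g ∘ f" := (comp g f) (at level 41, left associativity).
Local Notation "f ⊗ g" := (thom f g) (at level 31, left associativity).
Local Notation "X ⊠ Y" := (tob X Y) (at level 31, left associativity).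
Local Notation "1" := (@unit_ob C).
Local Notation id := idm.
Local Notation TO := (Fob (BT B)).
Local Notation TH := (Fhom (BT B)).
Local Notation mu := (Bmu B).
Local Notation eta := (Beta B).
Local Notation T2 := (BT2 B).
Local Notation T0 := (BT0 B).
Local Notation "∨ X" := (ldual C D X) (at level 5).
Local Notation ev := (lev C D).
Local Notation coev := (lcoev C D).
Local Notation dual := (dual_hom C D).
Local Notation "[ X , Y ]" := (lihom C D X Y).
Local Notation lmap := (lihom_map C D).
Local Notation evi := (ev_int C D).
Local Notation coevi := (coev_int C D).

Definition fusion_l (X Y : ob C) : hom C := (id (TO X) ⊗ mu Y) ∘ T2 X (TO Y).

Definition is_left_hopf : Prop :=
  forall X Y, exists g : hom C,
    is_hom g (TO X ⊠ TO Y) (TO (X ⊠ TO Y)) /\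
    g ∘ fusion_l X Y = id (TO (X ⊠ TO Y)) /\
    fusion_l X Y ∘ g = id (TO X ⊠ TO Y).

Definition is_left_unary_antipode (s : ob C -> hom C) : Prop :=
  (forall X, is_hom (s X) (TO (∨ (TO X))) (∨ X)) /\
  (forall f, dual f ∘ s (cod f) = s (dom f) ∘ TH (dual (TH f))) /\
  (forall X,
     T0 ∘ TH (ev X) ∘ TH (dual (eta X) ⊗ id X)
     = ev (TO X) ∘ ((s (TO X) ∘ TH (dual (mu X))) ⊗ id (TO X))
       ∘ T2 (∨ (TO X)) X) /\
  (forall X,
     (eta X ⊗ id (∨ X)) ∘ coev X ∘ T0
     = (mu X ⊗ s X) ∘ T2 (TO X) (∨ (TO X)) ∘ TH (coev (TO X))).

Definition has_left_unary_antipode : Prop :=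
  exists s, is_left_unary_antipode s.

Definition is_left_binary_antipode (s : ob C -> ob C -> hom C) : Prop :=
  (forall X Y, is_hom (s X Y) (TO [TO X, Y]) [X, TO Y]) /\
  (forall f g,   (* f : X' -> X, g : Y -> Y' *)
     s (dom f) (cod g) ∘ TH (lmap (TH f) g) = lmap f (TH g) ∘ s (cod f) (dom g)) /\
  (forall X Y,
     TH (evi X Y ∘ (lmap (eta X) (id Y) ⊗ id X))
     = evi (TO X) (TO Y) ∘ ((s (TO X) Y ∘ TH (lmap (mu X) (id Y))) ⊗ id (TO X))
       ∘ T2 [TO X, Y] X) /\
  (forall X Y,
     lmap (id X) (id (TO Y) ⊗ eta X) ∘ coevi X (TO Y)
     = lmap (id X) ((id (TO Y) ⊗ mu X) ∘ T2 Y (TO X))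
       ∘ s X (Y ⊠ TO X) ∘ TH (coevi (TO X) Y)).

Definition has_left_binary_antipode : Prop :=
  exists s, is_left_binary_antipode s.

End Antipodes.

(** - A left unary antipode [s] yields the left binary antipode
      [s_{X,Y} = (TY ⊗ s_X) T_2(Y, ∨TX)]; its two axioms reduce to those of [s]
      by coassociativity and counitality of [T_2].
    - A left binary antipode [s] yields the inverse of [H^l_{X,Y}]: it is the
      morphism [TX ⊗ TY -> T(X ⊗ TY)] corresponding, under the duality
      [- ⊗ TY ⊣ - ⊗ ∨TY], to [s_{TY, X ⊗ TY} T(X ⊗ TY ⊗ ∨μ_Y) T(X ⊗ coev_{TY})];
      the two antipode axioms give the two inverse laws.
    - If [H^l] is invertible, the left unary antipode [s_X : T(∨TX) -> ∨X] is
      the morphism corresponding under the duality to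
      [T_0 T(ev_{TX}) (H^l_{∨TX,X})^{-1} (T(∨TX) ⊗ η_X)]; its axioms follow from
      the naturality and comodule properties that [(H^l)^{-1}] inherits from
      [H^l]. *)

From Stdlib Require Import Setoid IndefiniteDescription.

Section LeftHopfMonads.
Variable C : SMCat.
Variable D : LeftAutonomous C.
Variable B : Bimonad C.
Local Notation "g ∘ f" := (comp g f) (at level 41, left associativity).
Local Notation "f ⊗ g" := (thom f g) (at level 31, left associativity).
Local Notation "X ⊠ Y" := (tob X Y) (at level 31, left associativity).
Local Notation "1" := (@unit_ob C).
Local Notation id := idm.
Local Notation TO := (Fob (BT B)).
Local Notation TH := (Fhom (BT B)).
Local Notation mu := (Bmu B).
Local Notation eta := (Beta B).
Local Notation T2 := (BT2 B).
Local Notation T0 := (BT0 B).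
Local Notation "∨ X" := (ldual C D X) (at level 5).
Local Notation ev := (lev C D).
Local Notation coev := (lcoev C D).
Local Notation dual := (dual_hom C D).
Local Notation Hl := (fusion_l C B).

Let bimonad_laws := Bax C B.

(* The bijection [hom(A, W ⊗ ∨X) ≅ hom(A ⊗ X, W)] of the duality [X ⊣ ∨X]. *)
Definition mate (W X : ob C) (h : hom C) : hom C := (id W ⊗ ev X) ∘ (h ⊗ id X).
Definition unmate (A X : ob C) (k : hom C) : hom C := (k ⊗ id (∨X)) ∘ (id A ⊗ coev X).

Lemma is_hom_comp (g f : hom C) A Y Y' Z :
  is_hom g Y' Z -> is_hom f A Y -> Y = Y' -> is_hom (g ∘ f) A Z.
Proof. intros [? ?] [? ?] E; subst; split; [rewrite dom_comp | rewrite cod_comp]; congruence. Qed.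

Lemma is_hom_tensor (f g : hom C) A A' Y Y' :
  is_hom f A Y -> is_hom g A' Y' -> is_hom (f ⊗ g) (A ⊠ A') (Y ⊠ Y').
Proof. intros [? ?] [? ?]; split; [rewrite dom_thom | rewrite cod_thom]; congruence. Qed.

Lemma is_hom_id (X : ob C) : is_hom (id X) X X.
Proof. split; [apply dom_idm | apply cod_idm]. Qed.

Lemma is_hom_T (f : hom C) A Y : is_hom f A Y -> is_hom (TH f) (TO A) (TO Y).
Proof. intros [? ?]; split; [rewrite F_dom | rewrite F_cod]; congruence. Qed.

Lemma is_hom_cast (f : hom C) A Y A' Y' : is_hom f A' Y' -> A' = A -> Y' = Y -> is_hom f A Y.
Proof. intros ? -> ->; assumption. Qed.

Lemma is_hom_ev X : is_hom (ev X) (∨X ⊠ X) 1. Proof. apply lev_hom. Qed.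
Lemma is_hom_coev X : is_hom (coev X) 1 (X ⊠ ∨X). Proof. apply lcoev_hom. Qed.
Lemma is_hom_mu X : is_hom (mu X) (TO (TO X)) (TO X). Proof. apply bimonad_laws. Qed.
Lemma is_hom_eta X : is_hom (eta X) X (TO X). Proof. apply bimonad_laws. Qed.
Lemma is_hom_T2 X Y : is_hom (T2 X Y) (TO (X ⊠ Y)) (TO X ⊠ TO Y). Proof. apply bimonad_laws. Qed.
Lemma is_hom_T0 : is_hom T0 (TO 1) 1. Proof. apply bimonad_laws. Qed.

(* Morphisms are untyped, so every rewrite carries side conditions [dom g = cod f];
   the tactics below discharge them by inferring [is_hom] judgements. *)
Ltac ob_eq :=
  try unfold lihom;
  repeat match goal with
  | H : cod ?f = _ |- context [cod ?f] => rewrite H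
  | H : dom ?f = _ |- context [dom ?f] => rewrite H
  end;
  repeat rewrite ?tob_assoc, ?tob_unitl, ?tob_unitr; first [reflexivity | congruence].

(* Extended below, once [is_hom_dual] and [is_hom_mate] are available. *)
Ltac hom_type_dual := fail.
Ltac hom_type_mate := fail.

Ltac hom_type :=
  lazymatch goal with
  | |- is_hom (comp _ _) _ _ => eapply is_hom_comp; [hom_type | hom_type | ob_eq]
  | |- is_hom (thom _ _) _ _ => eapply is_hom_tensor; [hom_type | hom_type]
  | |- is_hom (idm _) _ _ => eapply is_hom_id
  | |- is_hom (Fhom _ _) _ _ => eapply is_hom_T; hom_type
  | |- is_hom (dual_hom _ _ _) _ _ => hom_type_dual
  | |- is_hom (mate _ _ _) _ _ => hom_type_mate
  | |- is_hom (lev _ _ _) _ _ => eapply is_hom_ev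
  | |- is_hom (lcoev _ _ _) _ _ => eapply is_hom_coev
  | |- is_hom (Bmu _ _) _ _ => eapply is_hom_mu
  | |- is_hom (Beta _ _) _ _ => eapply is_hom_eta
  | |- is_hom (BT2 _ _ _) _ _ => eapply is_hom_T2
  | |- is_hom (BT0 _) _ _ => eapply is_hom_T0
  | |- is_hom (lihom_map _ _ _ _) _ _ => unfold lihom_map; hom_type
  | |- is_hom (unmate _ _ _) _ _ => unfold unmate; hom_type
  | |- is_hom (ev_int _ _ _ _) _ _ => unfold ev_int; hom_type
  | |- is_hom (coev_int _ _ _ _) _ _ => unfold coev_int; hom_type
  | |- is_hom _ _ _ =>
      first [ eassumption
            | match goal with H : forall _, is_hom _ _ _ |- _ => eapply H end
            | match goal with H : forall _ _, is_hom _ _ _ |- _ => eapply H end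
            | split; reflexivity ]
  end.

Ltac simpl_dom_cod :=
  repeat match goal with
  | |- context [dom ?t] =>
      let H := fresh in eassert (H : is_hom t _ _) by hom_type;
      lazymatch type of H with
      | is_hom _ (dom t) _ => fail
      | _ => rewrite (proj1 H); clear H
      end
  | |- context [cod ?t] =>
      let H := fresh in eassert (H : is_hom t _ _) by hom_type;
      lazymatch type of H with
      | is_hom _ _ (cod t) => fail
      | _ => rewrite (proj2 H); clear H
      end
  end.

Ltac typecheck := eapply is_hom_cast; [hom_type | simpl_dom_cod; ob_eq | simpl_dom_cod; ob_eq].

Lemma composable_of_is_hom (g f : hom C) A Y Y' Z :
  is_hom g Y' Z -> is_hom f A Y -> Y = Y' -> dom g = cod f.
Proof. intros [? ?] [? ?] ?; congruence. Qed.

Lemma dom_of_is_hom (f : hom C) A Y X : is_hom f A Y -> A = X -> dom f = X.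
Proof. intros [? ?] ?; congruence. Qed.

Lemma cod_of_is_hom (f : hom C) A Y X : is_hom f A Y -> Y = X -> cod f = X.
Proof. intros [? ?] ?; congruence. Qed.

Ltac composable :=
  lazymatch goal with
  | |- dom _ = cod _ => eapply composable_of_is_hom; [hom_type | hom_type | ob_eq]
  | |- cod _ = dom _ => symmetry; eapply composable_of_is_hom; [hom_type | hom_type | ob_eq]
  | |- dom _ = _ => eapply dom_of_is_hom; [hom_type | simpl_dom_cod; ob_eq]
  | |- cod _ = _ => eapply cod_of_is_hom; [hom_type | simpl_dom_cod; ob_eq]
  | |- is_hom _ _ _ => typecheck
  end.

Ltac reassoc := repeat rewrite <- comp_assoc by composable.

Lemma is_hom_dual (f : hom C) A Y : is_hom f A Y -> is_hom (dual f) (∨Y) (∨A).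
Proof. intros [<- <-]; unfold dual_hom; typecheck. Qed.

Lemma is_hom_mate (h : hom C) A W X : is_hom h A (W ⊠ ∨X) -> is_hom (mate W X h) (A ⊠ X) W.
Proof. intros; unfold mate; typecheck. Qed.

Ltac hom_type_dual ::= eapply is_hom_dual; hom_type.
Ltac hom_type_mate ::= eapply is_hom_mate; typecheck.

Lemma compA (h g f : hom C) : dom h = cod g -> dom g = cod f -> h ∘ (g ∘ f) = (h ∘ g) ∘ f.
Proof. apply comp_assoc. Qed.

Lemma comp_id_l (f : hom C) X : cod f = X -> id X ∘ f = f.
Proof. intros <-; apply comp_idl. Qed.

Lemma comp_id_r (f : hom C) X : dom f = X -> f ∘ id X = f.
Proof. intros <-; apply comp_idr. Qed.

Lemma tensor_comp (g f g' f' : hom C) : dom g = cod f -> dom g' = cod f' ->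
  (g ∘ f) ⊗ (g' ∘ f') = (g ⊗ g') ∘ (f ⊗ f').
Proof. apply thom_comp. Qed.

Lemma tensor_id (X Y : ob C) : id X ⊗ id Y = id (X ⊠ Y).
Proof. apply thom_id. Qed.

Lemma tensorA (f g h : hom C) : (f ⊗ g) ⊗ h = f ⊗ (g ⊗ h).
Proof. apply thom_assoc. Qed.

Lemma tensor1l (f : hom C) : id 1 ⊗ f = f. Proof. apply thom_unitl. Qed.
Lemma tensor1r (f : hom C) : f ⊗ id 1 = f. Proof. apply thom_unitr. Qed.

Lemma tensor_compl (g f : hom C) X : dom g = cod f -> (g ∘ f) ⊗ id X = (g ⊗ id X) ∘ (f ⊗ id X).
Proof. intros; rewrite <- tensor_comp, comp_id_l by composable; reflexivity. Qed.

Lemma tensor_compr (g f : hom C) X : dom g = cod f -> id X ⊗ (g ∘ f) = (id X ⊗ g) ∘ (id X ⊗ f).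
Proof. intros; rewrite <- tensor_comp, comp_id_l by composable; reflexivity. Qed.

Lemma tensor_compr_comp (g f r : hom C) X : dom g = cod f -> cod r = X ⊠ dom f ->
  (id X ⊗ g) ∘ ((id X ⊗ f) ∘ r) = (id X ⊗ (g ∘ f)) ∘ r.
Proof. intros; rewrite compA, <- tensor_compr by composable; reflexivity. Qed.

Lemma tensor_split_l (f g : hom C) : f ⊗ g = (f ⊗ id (cod g)) ∘ (id (dom f) ⊗ g).
Proof. rewrite <- tensor_comp, comp_id_l, comp_id_r by composable; reflexivity. Qed.

Lemma tensor_split_r (f g : hom C) : f ⊗ g = (id (cod f) ⊗ g) ∘ (f ⊗ id (dom g)).
Proof. rewrite <- tensor_comp, comp_id_l, comp_id_r by composable; reflexivity. Qed.

Lemma interchange (f g : hom C) X X' Y Y' : dom f = X -> cod f = X' -> dom g = Y -> cod g = Y' ->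
  (id X' ⊗ g) ∘ (f ⊗ id Y) = (f ⊗ id Y') ∘ (id X ⊗ g).
Proof. intros <- <- <- <-; rewrite <- tensor_split_l, <- tensor_split_r; reflexivity. Qed.

Lemma unit_cod_slide (g f : hom C) Y Z : cod f = 1 -> cod g = 1 -> dom g = Y -> dom f = Z ->
  g ∘ (f ⊗ id Y) = f ∘ (id Z ⊗ g).
Proof.
  intros E1 E2 <- <-. rewrite <- (tensor1l g) at 1.
  rewrite <- E1, <- tensor_split_r, tensor_split_l, E2, tensor1r; reflexivity.
Qed.

Lemma unit_dom_slide (g f : hom C) Y Z : dom f = 1 -> dom g = 1 -> cod f = Y -> cod g = Z ->
  (id Y ⊗ g) ∘ f = (f ⊗ id Z) ∘ g.
Proof.
  intros E1 E2 <- <-.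
  assert (Er := tensor_split_r f g); rewrite E2, tensor1r in Er.
  assert (El := tensor_split_l f g); rewrite E1, tensor1l in El.
  congruence.
Qed.

Lemma inverse_natural (G H k k' G0 H0 : hom C) P P' Q Q' :
  is_hom G Q' P' -> is_hom H P' Q' -> is_hom k P P' -> is_hom k' Q Q' ->
  is_hom G0 Q P -> is_hom H0 P Q ->
  G ∘ H = id P' -> H0 ∘ G0 = id Q -> H ∘ k = k' ∘ H0 -> G ∘ k' = k ∘ G0.
Proof.
  intros ? ? ? ? ? ? E1 E2 E3.
  rewrite <- (comp_id_r k' Q), <- E2, (compA k'), <- E3, !compA, E1, comp_id_l by composable.
  reflexivity.
Qed.

Lemma zig X : (id X ⊗ ev X) ∘ (coev X ⊗ id X) = id X. Proof. apply zigzag1. Qed.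
Lemma zag X : (ev X ⊗ id (∨X)) ∘ (id (∨X) ⊗ coev X) = id (∨X). Proof. apply zigzag2. Qed.

Lemma dual_id X : dual (id X) = id (∨X).
Proof. unfold dual_hom; rewrite dom_idm, cod_idm, !tensor_id, comp_id_r by composable; apply zag. Qed.

Lemma ev_dual (f : hom C) : ev (dom f) ∘ (dual f ⊗ id (dom f)) = ev (cod f) ∘ (id (∨(cod f)) ⊗ f).
Proof.
  unfold dual_hom. rewrite !tensor_compl by composable. rewrite !tensorA, !tensor_id. reassoc.
  rewrite (compA (ev (dom f))), (unit_cod_slide _ _ _ (∨ (cod f) ⊠ cod f)) by composable.
  reassoc. rewrite <- (tensor_id (∨ (cod f))), tensorA.
  rewrite (compA (id (∨ (cod f)) ⊗ (id (cod f) ⊗ ev (dom f)))), <- tensor_compr by composable.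
  rewrite (interchange f (ev (dom f)) (dom f) (cod f) (∨(dom f) ⊠ dom f) 1), tensor1r by composable.
  rewrite tensor_compr by composable. reassoc.
  rewrite <- (tensor_compr (id (dom f) ⊗ ev (dom f))), zig, tensor_id, comp_id_r by composable.
  reflexivity.
Qed.

Lemma coev_dual (f : hom C) :
  (id (cod f) ⊗ dual f) ∘ coev (cod f) = (f ⊗ id (∨(dom f))) ∘ coev (dom f).
Proof.
  unfold dual_hom. rewrite !tensor_compr by composable. reassoc.
  rewrite <- (tensorA (id (cod f)) (id (∨(cod f))) (coev (dom f))), tensor_id.
  rewrite (unit_dom_slide (coev (dom f)) (coev (cod f)) _ (dom f ⊠ ∨(dom f))) by composable.
  rewrite !tensorA, <- (tensorA (id (cod f)) (id (∨(cod f)))), tensor_id.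
  rewrite (compA (id (cod f ⊠ ∨ (cod f)) ⊗ (f ⊗ id ∨ (dom f)))) by composable.
  rewrite (interchange (coev (cod f)) (f ⊗ id ∨ (dom f)) 1 _ _ (cod f ⊠ ∨ (dom f))) by composable.
  rewrite tensor1l, <- (tensor_id (cod f) (∨ (dom f))), <- !tensorA. reassoc.
  rewrite (compA (id (cod f) ⊗ ev (cod f) ⊗ id ∨ (dom f))) by composable.
  rewrite <- tensor_compl, zig, tensor_id, comp_id_l by composable. reflexivity.
Qed.

Lemma ev_dual_at (f : hom C) A Y : is_hom f A Y -> ev A ∘ (dual f ⊗ id A) = ev Y ∘ (id (∨Y) ⊗ f).
Proof. intros [<- <-]; apply ev_dual. Qed.

Lemma coev_dual_at (f : hom C) A Y : is_hom f A Y ->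
  (id Y ⊗ dual f) ∘ coev Y = (f ⊗ id (∨A)) ∘ coev A.
Proof. intros [<- <-]; apply coev_dual. Qed.

Lemma mate_unmate h A W X : is_hom h A (W ⊠ ∨X) -> unmate A X (mate W X h) = h.
Proof.
  intros Hh. unfold unmate, mate. rewrite tensor_compl by composable. reassoc.
  rewrite (tensorA h), tensor_id.
  rewrite <- (interchange h (coev X) A (W ⊠ ∨X) 1 (X ⊠ ∨X)), tensor1r by composable.
  rewrite <- (tensor_id W (∨ X)), !tensorA, compA, <- tensor_compr by composable.
  rewrite zag, tensor_id, comp_id_l by composable. reflexivity.
Qed.

Lemma unmate_mate k A W X : is_hom k (A ⊠ X) W -> mate W X (unmate A X k) = k.
Proof.
  intros Hk. unfold unmate, mate. rewrite tensor_compl, tensorA, tensor_id by composable.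
  rewrite (compA (id W ⊗ ev X)) by composable.
  rewrite (interchange k (ev X) (A ⊠ X) W (∨X ⊠ X) 1), tensor1r by composable.
  rewrite <- (tensor_id A X), !tensorA. reassoc.
  rewrite <- tensor_compr, zig, tensor_id, comp_id_r by composable. reflexivity.
Qed.

Lemma mate_inj h h' A W X : is_hom h A (W ⊠ ∨X) -> is_hom h' A (W ⊠ ∨X) ->
  mate W X h = mate W X h' -> h = h'.
Proof. intros ? ? E. rewrite <- (mate_unmate h A W X), <- (mate_unmate h' A W X), E; auto. Qed.

Lemma comp_mate (g h : hom C) W W' X : is_hom g W W' -> cod h = W ⊠ ∨X ->
  g ∘ mate W X h = mate W' X ((g ⊗ id (∨X)) ∘ h).
Proof.
  intros Hg Hh. unfold mate. rewrite tensor_compl, compA by composable.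
  rewrite <- (tensor1r g) at 1. rewrite <- (interchange g (ev X) W W' (∨X ⊠ X) 1) by composable.
  rewrite tensorA, tensor_id. reassoc. reflexivity.
Qed.

Lemma mate_comp (h f : hom C) W X : dom h = cod f -> cod h = W ⊠ ∨X ->
  mate W X h ∘ (f ⊗ id X) = mate W X (h ∘ f).
Proof. intros. unfold mate. rewrite tensor_compl by composable. reassoc. reflexivity. Qed.

Lemma mate_dual (h u : hom C) A W X' X : is_hom h A (W ⊠ ∨X) -> is_hom u X' X ->
  mate W X' ((id W ⊗ dual u) ∘ h) = mate W X h ∘ (id A ⊗ u).
Proof.
  intros Hh [<- <-]. unfold mate. rewrite tensor_compl, compA by composable.
  rewrite tensorA, <- tensor_compr, ev_dual, tensor_compr by composable. reassoc.
  rewrite <- tensorA, tensor_id.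
  rewrite (interchange h u A (W ⊠ ∨(cod u)) (dom u) (cod u)) by composable. reflexivity.
Qed.

Lemma mate_coev A X : mate (A ⊠ X) X (id A ⊗ coev X) = id (A ⊠ X).
Proof.
  unfold mate. rewrite <- (tensor_id A X), !tensorA.
  rewrite <- tensor_comp, comp_id_l, zig by composable. reflexivity.
Qed.

Lemma mate_tensor_unit (h : hom C) W A X : is_hom h A (1 ⊠ ∨X) ->
  mate W X (id W ⊗ h) = id W ⊗ mate 1 X h.
Proof. intros. unfold mate. rewrite tensorA, <- tensor_compr, tensor1l by composable. reflexivity. Qed.

Lemma mate_unit X h : mate 1 X h = ev X ∘ (h ⊗ id X).
Proof. unfold mate; rewrite tensor1l; reflexivity. Qed.

Lemma dual_comp (g f : hom C) : dom g = cod f -> dual (g ∘ f) = dual f ∘ dual g.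
Proof.
  intros E.
  apply (mate_inj _ _ (∨ (cod g)) 1 (dom f)); [typecheck | typecheck |].
  assert (E1 : dual (g ∘ f) = (id 1 ⊗ dual (g ∘ f)) ∘ id (∨ (cod g)))
    by (rewrite tensor1l, comp_id_r by composable; reflexivity).
  assert (E2 : dual f ∘ dual g = (id 1 ⊗ dual f) ∘ ((id 1 ⊗ dual g) ∘ id (∨ (cod g))))
    by (rewrite !tensor1l, comp_id_r by composable; reflexivity).
  rewrite E1, E2.
  rewrite (mate_dual _ (g ∘ f) (∨ (cod g)) 1 (dom f) (cod g)) by typecheck.
  rewrite (mate_dual _ f (∨ (cod g)) 1 (dom f) (cod f)) by typecheck.
  rewrite (mate_dual _ g (∨ (cod g)) 1 (cod f) (cod g)) by typecheck.
  rewrite <- compA, <- tensor_compr by composable. reflexivity.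
Qed.


Lemma T_comp (g f : hom C) : dom g = cod f -> TH (g ∘ f) = TH g ∘ TH f.
Proof. apply F_comp. Qed.

Lemma T_id X : TH (id X) = id (TO X).
Proof. apply F_id. Qed.

Lemma T2_natural (f g : hom C) A A' Y Y' : is_hom f A A' -> is_hom g Y Y' ->
  T2 A' Y' ∘ TH (f ⊗ g) = (TH f ⊗ TH g) ∘ T2 A Y.
Proof. intros [<- <-] [<- <-]. apply bimonad_laws. Qed.

Lemma T2_natural_r (g : hom C) A Y Y' : is_hom g Y Y' ->
  (id (TO A) ⊗ TH g) ∘ T2 A Y = T2 A Y' ∘ TH (id A ⊗ g).
Proof. intros. rewrite (T2_natural (id A) g A A Y Y'), T_id by typecheck. reflexivity. Qed.

Lemma mu_natural (f : hom C) A A' : is_hom f A A' -> mu A' ∘ TH (TH f) = TH f ∘ mu A.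
Proof. intros [<- <-]. apply bimonad_laws. Qed.

Lemma eta_natural (f : hom C) A A' : is_hom f A A' -> eta A' ∘ f = TH f ∘ eta A.
Proof. intros [<- <-]. apply bimonad_laws. Qed.

Lemma mu_assoc X : mu X ∘ TH (mu X) = mu X ∘ mu (TO X). Proof. apply bimonad_laws. Qed.
Lemma mu_eta X : mu X ∘ eta (TO X) = id (TO X). Proof. apply bimonad_laws. Qed.
Lemma mu_T_eta X : mu X ∘ TH (eta X) = id (TO X). Proof. apply bimonad_laws. Qed.

Lemma T2_coassoc X Y Z :
  (T2 X Y ⊗ id (TO Z)) ∘ T2 (X ⊠ Y) Z = (id (TO X) ⊗ T2 Y Z) ∘ T2 X (Y ⊠ Z).
Proof. apply bimonad_laws. Qed.

Lemma T2_counit_l X : (T0 ⊗ id (TO X)) ∘ T2 1 X = id (TO X). Proof. apply bimonad_laws. Qed.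
Lemma T2_counit_r X : (id (TO X) ⊗ T0) ∘ T2 X 1 = id (TO X). Proof. apply bimonad_laws. Qed.

Lemma is_hom_fusion X Y : is_hom (Hl X Y) (TO (X ⊠ TO Y)) (TO X ⊠ TO Y).
Proof. unfold fusion_l. typecheck. Qed.

Lemma fusion_natural_l (f : hom C) A A' Y : is_hom f A A' ->
  Hl A' Y ∘ TH (f ⊗ id (TO Y)) = (TH f ⊗ id (TO Y)) ∘ Hl A Y.
Proof.
  intros. unfold fusion_l. reassoc.
  rewrite (T2_natural f (id (TO Y)) A A' (TO Y) (TO Y)), T_id by typecheck.
  rewrite compA, <- tensor_comp, comp_id_l, comp_id_r by composable.
  rewrite compA, <- tensor_comp, comp_id_l, comp_id_r by composable. reflexivity.
Qed.

Lemma fusion_natural_r (g : hom C) X Y Y' : is_hom g Y Y' ->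
  Hl X Y' ∘ TH (id X ⊗ TH g) = (id (TO X) ⊗ TH g) ∘ Hl X Y.
Proof.
  intros. unfold fusion_l. reassoc.
  rewrite (T2_natural (id X) (TH g) X X (TO Y) (TO Y')), T_id by typecheck.
  rewrite compA, <- tensor_comp, comp_id_l, (mu_natural g Y Y') by composable.
  rewrite compA, <- tensor_comp, comp_id_l by composable. reflexivity.
Qed.

Lemma fusion_mu X Y : Hl X Y ∘ TH (id X ⊗ mu Y) = (id (TO X) ⊗ mu Y) ∘ Hl X (TO Y).
Proof.
  unfold fusion_l. reassoc.
  rewrite (T2_natural (id X) (mu Y) X X (TO (TO Y)) (TO Y)), T_id by typecheck.
  rewrite compA, <- tensor_comp, comp_id_l, mu_assoc by composable.
  rewrite compA, <- tensor_comp, comp_id_l by composable. reflexivity.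
Qed.

Lemma fusion_eta A X : Hl A X ∘ TH (id A ⊗ eta X) = T2 A X.
Proof.
  unfold fusion_l. reassoc.
  rewrite (T2_natural (id A) (eta X) A A X (TO X)), T_id by typecheck.
  rewrite compA, <- tensor_comp, comp_id_l, mu_T_eta, tensor_id, comp_id_l by composable.
  reflexivity.
Qed.

Lemma fusion_coassoc A Y Z :
  (T2 A Y ⊗ id (TO Z)) ∘ Hl (A ⊠ Y) Z = (id (TO A) ⊗ Hl Y Z) ∘ T2 A (Y ⊠ TO Z).
Proof.
  unfold fusion_l.
  rewrite (compA (T2 A Y ⊗ id (TO Z))), <- tensor_comp, comp_id_l, comp_id_r by composable.
  rewrite (tensor_split_r (T2 A Y) (mu Z)), (proj2 (is_hom_T2 A Y)), (proj1 (is_hom_mu Z)).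
  reassoc. rewrite T2_coassoc, <- (tensor_id (TO A) (TO Y)), tensorA.
  rewrite tensor_compr_comp by composable. reflexivity.
Qed.

Lemma T0_fusion_unit X : (T0 ⊗ id (TO X)) ∘ Hl 1 X = mu X.
Proof.
  unfold fusion_l. rewrite compA, <- tensor_comp, comp_id_l, comp_id_r by composable.
  rewrite tensor_split_r, (proj2 is_hom_T0), (proj1 (is_hom_mu X)), tensor1l.
  rewrite <- compA, T2_counit_l, comp_id_r by composable. reflexivity.
Qed.

Section UnaryToBinary.
Variable s : ob C -> hom C.
Hypothesis Hs : is_left_unary_antipode C D B s.

Lemma is_hom_unary X : is_hom (s X) (TO (∨ (TO X))) (∨ X). Proof. apply Hs. Qed.

Lemma unary_natural (f : hom C) : dual f ∘ s (cod f) = s (dom f) ∘ TH (dual (TH f)).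
Proof. apply Hs. Qed.

Lemma unary_ev X : T0 ∘ TH (ev X) ∘ TH (dual (eta X) ⊗ id X)
  = ev (TO X) ∘ ((s (TO X) ∘ TH (dual (mu X))) ⊗ id (TO X)) ∘ T2 (∨ (TO X)) X.
Proof. apply Hs. Qed.

Lemma unary_coev X : (eta X ⊗ id (∨ X)) ∘ coev X ∘ T0
  = (mu X ⊗ s X) ∘ T2 (TO X) (∨ (TO X)) ∘ TH (coev (TO X)).
Proof. apply Hs. Qed.

Definition binary_of_unary (X Y : ob C) : hom C := (id (TO Y) ⊗ s X) ∘ T2 Y (∨(TO X)).

Lemma is_hom_binary_of_unary X Y :
  is_hom (binary_of_unary X Y) (TO (lihom C D (TO X) Y)) (lihom C D X (TO Y)).
Proof. unfold binary_of_unary. pose proof is_hom_unary. typecheck. Qed.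

Lemma binary_of_unary_natural (f g : hom C) :
  binary_of_unary (dom f) (cod g) ∘ TH (lihom_map C D (TH f) g)
  = lihom_map C D f (TH g) ∘ binary_of_unary (cod f) (dom g).
Proof.
  pose proof is_hom_unary. unfold binary_of_unary, lihom_map. reassoc.
  rewrite (T2_natural g (dual (TH f)) (dom g) (cod g) (∨ (TO (cod f))) (∨ (TO (dom f))))
    by typecheck.
  rewrite compA, <- tensor_comp, comp_id_l, <- unary_natural by composable.
  rewrite compA, <- tensor_comp, comp_id_r by composable. reflexivity.
Qed.

Lemma binary_of_unary_ev X Y :
  TH (ev_int C D X Y ∘ (lihom_map C D (eta X) (id Y) ⊗ id X))
  = ev_int C D (TO X) (TO Y)
    ∘ ((binary_of_unary (TO X) Y ∘ TH (lihom_map C D (mu X) (id Y))) ⊗ id (TO X))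
    ∘ T2 (lihom C D (TO X) Y) X.
Proof.
  pose proof is_hom_unary. unfold binary_of_unary, lihom_map, ev_int, lihom. reassoc.
  rewrite (T2_natural (id Y) (dual (mu X)) Y Y (∨ (TO X)) (∨ (TO (TO X)))), T_id by typecheck.
  rewrite (compA (id (TO Y) ⊗ s (TO X))), <- (tensor_comp (id (TO Y))), comp_id_l by composable.
  rewrite (tensor_compl (id (TO Y) ⊗ _)) by composable. reassoc.
  rewrite T2_coassoc, (tensorA (id (TO Y)) (s (TO X) ∘ _)).
  rewrite (compA (id (TO Y) ⊗ ev (TO X))), <- (tensor_compr (ev (TO X))) by composable.
  rewrite (compA (id (TO Y) ⊗ _)), <- (tensor_compr (ev (TO X) ∘ _)) by composable.
  rewrite <- unary_ev, <- (compA T0), <- (T_comp (ev X)), tensor_compr by composable. reassoc.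
  rewrite <- (T_id Y),
    <- (T2_natural (id Y) (ev X ∘ (dual (eta X) ⊗ id X)) Y Y (∨ (TO X) ⊠ X) 1) by typecheck.
  rewrite compA, T_id, T2_counit_r, comp_id_l by composable.
  rewrite tensorA, <- tensor_compr by composable. reflexivity.
Qed.

Lemma binary_of_unary_coev X Y :
  lihom_map C D (id X) (id (TO Y) ⊗ eta X) ∘ coev_int C D X (TO Y)
  = lihom_map C D (id X) ((id (TO Y) ⊗ mu X) ∘ T2 Y (TO X))
    ∘ binary_of_unary X (Y ⊠ TO X) ∘ TH (coev_int C D (TO X) Y).
Proof.
  pose proof is_hom_unary. unfold binary_of_unary, lihom_map, coev_int. rewrite !dual_id. reassoc.
  rewrite (compA (_ ⊗ id (∨ X)) (id _ ⊗ s X)) by composable.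
  rewrite <- (interchange ((id (TO Y) ⊗ mu X) ∘ T2 Y (TO X)) (s X) _ _ (TO (∨ (TO X))) (∨ X))
    by composable.
  reassoc. rewrite (compA (_ ⊗ id (TO (∨ (TO X)))) (T2 (Y ⊠ TO X) _)) by composable.
  rewrite (tensor_compl (id (TO Y) ⊗ mu X)) by composable. reassoc.
  rewrite (compA (T2 Y (TO X) ⊗ _)), T2_coassoc by composable. reassoc.
  rewrite <- (T_id Y), (T2_natural (id Y) (coev (TO X)) Y Y 1 (TO X ⊠ ∨ (TO X))), T_id
    by typecheck.
  rewrite <- (tensor_id (TO Y) (TO X)), !tensorA. repeat rewrite tensor_compr_comp by composable.
  rewrite <- (tensor_comp (id (TO X))), comp_id_l, comp_id_r, <- unary_coev by composable.
  rewrite !tensor_compr by composable. reassoc. rewrite T2_counit_r, comp_id_r by composable.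
  reflexivity.
Qed.

Lemma binary_antipode_of_unary : is_left_binary_antipode C D B binary_of_unary.
Proof.
  split; [| split; [| split]].
  - apply is_hom_binary_of_unary.
  - apply binary_of_unary_natural.
  - apply binary_of_unary_ev.
  - apply binary_of_unary_coev.
Qed.

End UnaryToBinary.

Section BinaryToHopf.
Variable s : ob C -> ob C -> hom C.
Hypothesis Hs : is_left_binary_antipode C D B s.

Lemma is_hom_binary X Y : is_hom (s X Y) (TO (Y ⊠ ∨(TO X))) (TO Y ⊠ ∨X). Proof. apply Hs. Qed.

Lemma binary_natural (f g : hom C) A A' Y Y' : is_hom f A A' -> is_hom g Y Y' ->
  s A Y' ∘ TH (g ⊗ dual (TH f)) = (TH g ⊗ dual f) ∘ s A' Y.
Proof. intros [<- <-] [<- <-]. apply Hs. Qed.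

Lemma binary_natural_l (f : hom C) A A' Y : is_hom f A A' ->
  s A Y ∘ TH (id Y ⊗ dual (TH f)) = (id (TO Y) ⊗ dual f) ∘ s A' Y.
Proof. intros Hf. rewrite <- T_id. exact (binary_natural f (id Y) A A' Y Y Hf (is_hom_id Y)). Qed.

Lemma binary_natural_r (g : hom C) A Y Y' : is_hom g Y Y' ->
  s A Y' ∘ TH (g ⊗ id (∨(TO A))) = (TH g ⊗ id (∨ A)) ∘ s A Y.
Proof.
  intros Hg. rewrite <- !dual_id, <- T_id.
  exact (binary_natural (id A) g A A Y Y' (is_hom_id A) Hg).
Qed.

Lemma binary_ev X Y :
  TH ((id Y ⊗ ev X) ∘ ((id Y ⊗ dual (eta X)) ⊗ id X))
  = (id (TO Y) ⊗ ev (TO X)) ∘ ((s (TO X) Y ∘ TH (id Y ⊗ dual (mu X))) ⊗ id (TO X))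
    ∘ T2 (Y ⊠ ∨(TO X)) X.
Proof. apply Hs. Qed.

Lemma binary_coev X Y :
  ((id (TO Y) ⊗ eta X) ⊗ id (∨X)) ∘ (id (TO Y) ⊗ coev X)
  = (Hl Y X ⊗ id (∨X)) ∘ s X (Y ⊠ TO X) ∘ TH (id Y ⊗ coev (TO X)).
Proof. rewrite <- dual_id. apply Hs. Qed.

Definition fusion_inv_transpose X Y : hom C :=
  s (TO Y) (X ⊠ TO Y) ∘ TH (id (X ⊠ TO Y) ⊗ dual (mu Y)) ∘ TH (id X ⊗ coev (TO Y)).
Definition fusion_inv X Y : hom C := mate (TO (X ⊠ TO Y)) (TO Y) (fusion_inv_transpose X Y).

Lemma is_hom_fusion_inv_transpose X Y :
  is_hom (fusion_inv_transpose X Y) (TO X) (TO (X ⊠ TO Y) ⊠ ∨(TO Y)).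
Proof. unfold fusion_inv_transpose. pose proof is_hom_binary. typecheck. Qed.

Lemma is_hom_fusion_inv X Y : is_hom (fusion_inv X Y) (TO X ⊠ TO Y) (TO (X ⊠ TO Y)).
Proof. unfold fusion_inv. pose proof is_hom_fusion_inv_transpose. typecheck. Qed.

Lemma fusion_fusion_inv X Y : Hl X Y ∘ fusion_inv X Y = id (TO X ⊠ TO Y).
Proof.
  pose proof is_hom_binary. pose proof is_hom_fusion_inv_transpose. pose proof is_hom_fusion.
  unfold fusion_inv. rewrite (comp_mate _ _ (TO (X ⊠ TO Y)) (TO X ⊠ TO Y)) by composable.
  unfold fusion_inv_transpose. reassoc.
  rewrite <- (T_comp (id (X ⊠ TO Y) ⊗ dual (mu Y))) by composable.
  rewrite <- (tensor_id X (TO Y)), tensorA, <- tensor_compr by composable.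
  rewrite (coev_dual_at (mu Y) (TO (TO Y)) (TO Y)) by typecheck.
  rewrite tensor_compr, <- tensorA, T_comp by composable.
  rewrite (compA (s _ _)) by composable.
  rewrite (binary_natural_r (id X ⊗ mu Y) (TO Y) (X ⊠ TO (TO Y)) (X ⊠ TO Y)) by typecheck.
  reassoc. rewrite (compA (Hl X Y ⊗ _)), <- tensor_compl, fusion_mu, tensor_compl by composable.
  reassoc. rewrite (compA (Hl X (TO Y) ⊗ _)), <- binary_coev by composable.
  rewrite (compA (id (TO X) ⊗ mu Y ⊗ _)), <- tensor_compl, <- tensor_compr by composable.
  rewrite mu_eta, !tensor_id, comp_id_l by composable.
  apply mate_coev.
Qed.

Lemma fusion_inv_fusion X Y : fusion_inv X Y ∘ Hl X Y = id (TO (X ⊠ TO Y)).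
Proof.
  pose proof is_hom_binary. pose proof is_hom_fusion_inv_transpose. pose proof is_hom_fusion.
  unfold fusion_inv. unfold fusion_l at 1. rewrite compA by composable.
  rewrite <- (mate_dual (fusion_inv_transpose X Y) (mu Y) (TO X) (TO (X ⊠ TO Y)) (TO (TO Y)) (TO Y))
    by typecheck.
  unfold fusion_inv_transpose. reassoc. rewrite (compA (id _ ⊗ dual (mu Y))) by composable.
  rewrite <- (binary_natural_l (mu Y) (TO (TO Y)) (TO Y) (X ⊠ TO Y)) by typecheck.
  rewrite <- (compA (s _ _)), (compA (TH (id _ ⊗ dual (TH (mu Y))))) by composable.
  rewrite <- (T_comp (id (X ⊠ TO Y) ⊗ dual (TH (mu Y)))) by composable.
  rewrite <- tensor_compr, <- dual_comp, mu_assoc, dual_comp by composable.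
  rewrite tensor_compr, T_comp by composable.
  rewrite <- (compA (TH (id _ ⊗ dual (mu (TO Y))))), (compA (s _ _)) by composable.
  rewrite <- (T_comp (id (X ⊠ TO Y) ⊗ dual (mu Y))) by composable.
  rewrite <- mate_comp, <- compA by composable.
  rewrite <- (T_id (TO Y)).
  rewrite <- (T2_natural ((id (X ⊠ TO Y) ⊗ dual (mu Y)) ∘ (id X ⊗ coev (TO Y))) (id (TO Y)) X
     ((X ⊠ TO Y) ⊠ ∨(TO (TO Y))) (TO Y) (TO Y)) by typecheck.
  unfold mate. rewrite compA, <- binary_ev, <- T_comp by composable.
  rewrite (tensor_compl (id _ ⊗ dual (mu Y))) by composable. reassoc.
  rewrite (compA (id _ ⊗ dual (eta (TO Y)) ⊗ _)), <- tensor_compl, <- tensor_compr by composable.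
  rewrite <- dual_comp, mu_eta, dual_id, !tensor_id, comp_id_l by composable.
  rewrite <- (tensor_id X (TO Y)), !tensorA, <- tensor_comp, comp_id_l, zig, tensor_id
    by composable.
  apply T_id.
Qed.

Lemma left_hopf_of_binary_antipode : is_left_hopf C B.
Proof.
  intros X Y. exists (fusion_inv X Y).
  split; [apply is_hom_fusion_inv | split; [apply fusion_inv_fusion | apply fusion_fusion_inv]].
Qed.

End BinaryToHopf.

Section HopfToUnary.
Hypothesis Hh : is_left_hopf C B.

Definition hopf_inv X Y : hom C := proj1_sig (constructive_indefinite_description _ (Hh X Y)).

Lemma hopf_inv_spec X Y : is_hom (hopf_inv X Y) (TO X ⊠ TO Y) (TO (X ⊠ TO Y)) /\
  hopf_inv X Y ∘ Hl X Y = id (TO (X ⊠ TO Y)) /\ Hl X Y ∘ hopf_inv X Y = id (TO X ⊠ TO Y).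
Proof. exact (proj2_sig (constructive_indefinite_description _ (Hh X Y))). Qed.

Lemma is_hom_hopf_inv X Y : is_hom (hopf_inv X Y) (TO X ⊠ TO Y) (TO (X ⊠ TO Y)).
Proof. apply hopf_inv_spec. Qed.

Lemma hopf_inv_fusion X Y : hopf_inv X Y ∘ Hl X Y = id (TO (X ⊠ TO Y)).
Proof. apply hopf_inv_spec. Qed.

Lemma fusion_hopf_inv X Y : Hl X Y ∘ hopf_inv X Y = id (TO X ⊠ TO Y).
Proof. apply hopf_inv_spec. Qed.

Lemma hopf_inv_commute (k k' : hom C) X Y X' Y' :
  is_hom k (TO (X ⊠ TO Y)) (TO (X' ⊠ TO Y')) -> is_hom k' (TO X ⊠ TO Y) (TO X' ⊠ TO Y') ->
  Hl X' Y' ∘ k = k' ∘ Hl X Y -> hopf_inv X' Y' ∘ k' = k ∘ hopf_inv X Y.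
Proof.
  intros. pose proof is_hom_hopf_inv. pose proof is_hom_fusion.
  apply (inverse_natural (hopf_inv X' Y') (Hl X' Y') k k' (hopf_inv X Y) (Hl X Y)
    (TO (X ⊠ TO Y)) (TO (X' ⊠ TO Y')) (TO X ⊠ TO Y) (TO X' ⊠ TO Y'));
    auto using hopf_inv_fusion, fusion_hopf_inv.
Qed.

Lemma hopf_inv_natural_l (f : hom C) A A' Y : is_hom f A A' ->
  hopf_inv A' Y ∘ (TH f ⊗ id (TO Y)) = TH (f ⊗ id (TO Y)) ∘ hopf_inv A Y.
Proof. intros. apply hopf_inv_commute; [typecheck | typecheck | apply fusion_natural_l; auto]. Qed.

Lemma hopf_inv_natural_r (g : hom C) X Y Y' : is_hom g Y Y' ->
  hopf_inv X Y' ∘ (id (TO X) ⊗ TH g) = TH (id X ⊗ TH g) ∘ hopf_inv X Y.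
Proof. intros. apply hopf_inv_commute; [typecheck | typecheck | apply fusion_natural_r; auto]. Qed.

Lemma hopf_inv_mu X Y : hopf_inv X Y ∘ (id (TO X) ⊗ mu Y) = TH (id X ⊗ mu Y) ∘ hopf_inv X (TO Y).
Proof. apply hopf_inv_commute; [typecheck | typecheck | apply fusion_mu]. Qed.

Lemma hopf_inv_T2 A X : hopf_inv A X ∘ T2 A X = TH (id A ⊗ eta X).
Proof.
  pose proof is_hom_hopf_inv. pose proof is_hom_fusion.
  rewrite <- fusion_eta, compA, hopf_inv_fusion, comp_id_l by composable. reflexivity.
Qed.

Lemma hopf_inv_coassoc A Y Z :
  (id (TO A) ⊗ hopf_inv Y Z) ∘ (T2 A Y ⊗ id (TO Z)) = T2 A (Y ⊠ TO Z) ∘ hopf_inv (A ⊠ Y) Z.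
Proof.
  pose proof is_hom_hopf_inv. pose proof is_hom_fusion.
  apply (inverse_natural (id (TO A) ⊗ hopf_inv Y Z) (id (TO A) ⊗ Hl Y Z) _ _
     (hopf_inv (A ⊠ Y) Z) (Hl (A ⊠ Y) Z)
     (TO (A ⊠ Y ⊠ TO Z)) (TO A ⊠ TO (Y ⊠ TO Z)) (TO (A ⊠ Y) ⊠ TO Z) (TO A ⊠ (TO Y ⊠ TO Z)));
   [typecheck | typecheck | typecheck | typecheck | typecheck | typecheck
   | | apply fusion_hopf_inv | symmetry; apply fusion_coassoc].
  rewrite <- tensor_comp, hopf_inv_fusion, comp_id_l by composable. apply tensor_id.
Qed.

Lemma mu_hopf_inv_unit X : mu X ∘ hopf_inv 1 X = T0 ⊗ id (TO X).
Proof.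
  pose proof is_hom_hopf_inv. pose proof is_hom_fusion.
  rewrite <- T0_fusion_unit, <- compA, fusion_hopf_inv, comp_id_r by composable. reflexivity.
Qed.

Definition unary_transpose X : hom C :=
  T0 ∘ TH (ev (TO X)) ∘ hopf_inv (∨(TO X)) X ∘ (id (TO (∨(TO X))) ⊗ eta X).
Definition unary_of_hopf X : hom C := unmate (TO (∨(TO X))) X (unary_transpose X).

Lemma is_hom_unary_transpose X : is_hom (unary_transpose X) (TO (∨(TO X)) ⊠ X) 1.
Proof. unfold unary_transpose. pose proof is_hom_hopf_inv. typecheck. Qed.

Lemma is_hom_unary_of_hopf X : is_hom (unary_of_hopf X) (TO (∨(TO X))) (∨ X).
Proof. unfold unary_of_hopf. pose proof is_hom_unary_transpose. typecheck. Qed.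

Lemma mate_unary_of_hopf X : mate 1 X (unary_of_hopf X) = unary_transpose X.
Proof. apply unmate_mate, is_hom_unary_transpose. Qed.

Lemma unary_of_hopf_natural (f : hom C) :
  dual f ∘ unary_of_hopf (cod f) = unary_of_hopf (dom f) ∘ TH (dual (TH f)).
Proof.
  pose proof is_hom_unary_of_hopf. pose proof is_hom_unary_transpose. pose proof is_hom_hopf_inv.
  apply (mate_inj _ _ (TO (∨ (TO (cod f)))) 1 (dom f)); [typecheck | typecheck |].
  rewrite <- (tensor1l (dual f)).
  rewrite (mate_dual (unary_of_hopf (cod f)) f (TO (∨ (TO (cod f)))) 1 (dom f) (cod f))
    by typecheck.
  rewrite <- mate_comp, !mate_unary_of_hopf by composable.
  unfold unary_transpose. reassoc.
  rewrite <- tensor_compr, (eta_natural f (dom f) (cod f)), tensor_compr by composable.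
  rewrite (compA (hopf_inv _ _)), (hopf_inv_natural_r f (∨ (TO (cod f))) (dom f) (cod f))
    by composable.
  reassoc. rewrite (compA (TH (ev (TO (cod f))))), <- T_comp by composable.
  rewrite <- (ev_dual_at (TH f) (TO (dom f)) (TO (cod f))), T_comp by composable. reassoc.
  rewrite (compA (TH (dual (TH f) ⊗ id (TO (dom f))))) by composable.
  rewrite <- (hopf_inv_natural_l (dual (TH f)) (∨ (TO (cod f))) (∨ (TO (dom f))) (dom f))
    by typecheck.
  reassoc. rewrite (interchange (TH (dual (TH f))) (eta (dom f)) _ _ (dom f) (TO (dom f)))
    by composable.
  reflexivity.
Qed.

Lemma unary_of_hopf_ev X : T0 ∘ TH (ev X) ∘ TH (dual (eta X) ⊗ id X)
  = ev (TO X) ∘ ((unary_of_hopf (TO X) ∘ TH (dual (mu X))) ⊗ id (TO X)) ∘ T2 (∨ (TO X)) X.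
Proof.
  pose proof is_hom_unary_of_hopf. pose proof is_hom_unary_transpose. pose proof is_hom_hopf_inv.
  rewrite <- mate_unit, <- mate_comp, mate_unary_of_hopf by composable.
  unfold unary_transpose. reassoc.
  rewrite (compA (id _ ⊗ eta (TO X))),
    (interchange (TH (dual (mu X))) (eta (TO X)) _ _ (TO X) (TO (TO X))) by composable.
  reassoc. rewrite (compA (hopf_inv _ _)) by composable.
  rewrite (hopf_inv_natural_l (dual (mu X)) (∨ (TO X)) (∨ (TO (TO X))) (TO X)) by typecheck.
  reassoc. rewrite (compA (TH (ev _))), <- (T_comp (ev (TO (TO X)))) by composable.
  rewrite (ev_dual_at (mu X) (TO (TO X)) (TO X)), T_comp by composable. reassoc.
  rewrite (compA (TH (id _ ⊗ mu X))), <- hopf_inv_mu by composable. reassoc.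
  rewrite (compA (id _ ⊗ mu X)), <- tensor_compr, mu_eta, tensor_id, comp_id_l by composable.
  rewrite hopf_inv_T2, <- (T_comp (ev (TO X))) by composable.
  rewrite <- (ev_dual_at (eta X) X (TO X)), T_comp by composable.
  reassoc. reflexivity.
Qed.

Lemma unary_of_hopf_coev X : (eta X ⊗ id (∨ X)) ∘ coev X ∘ T0
  = (mu X ⊗ unary_of_hopf X) ∘ T2 (TO X) (∨ (TO X)) ∘ TH (coev (TO X)).
Proof.
  pose proof is_hom_unary_of_hopf. pose proof is_hom_unary_transpose. pose proof is_hom_hopf_inv.
  apply (mate_inj _ _ (TO 1) (TO X) X); [typecheck | typecheck |].
  rewrite <- (mate_comp _ T0) by composable.
  rewrite <- (comp_mate (eta X) (coev X) X (TO X) X) by typecheck.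
  change (mate X X (coev X)) with ((id X ⊗ ev X) ∘ (coev X ⊗ id X)).
  rewrite zig, comp_id_r by composable.
  rewrite <- (mate_comp _ (TH (coev (TO X)))), <- (mate_comp _ (T2 (TO X) _)) by composable.
  assert (E : mu X ⊗ unary_of_hopf X = (mu X ⊗ id (∨ X)) ∘ (id (TO (TO X)) ⊗ unary_of_hopf X))
    by (rewrite <- tensor_comp, comp_id_l, comp_id_r by composable; reflexivity).
  rewrite E, <- (comp_mate (mu X) _ (TO (TO X)) (TO X) X) by typecheck.
  rewrite (mate_tensor_unit (unary_of_hopf X) _ (TO (∨ (TO X))) X), mate_unary_of_hopf
    by typecheck.
  unfold unary_transpose. rewrite !tensor_compr by composable. reassoc.
  rewrite <- (tensorA (id (TO (TO X))) (id (TO (∨ (TO X)))) (eta X)), tensor_id.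
  rewrite (compA (id _ ⊗ eta X)) by composable.
  rewrite (interchange (T2 (TO X) (∨ (TO X))) (eta X) (TO (TO X ⊠ ∨ (TO X))) _ X (TO X))
    by composable.
  reassoc. rewrite (compA (id _ ⊗ hopf_inv _ _)), hopf_inv_coassoc by composable. reassoc.
  rewrite (interchange (TH (coev (TO X))) (eta X) (TO 1) _ X (TO X)) by composable. reassoc.
  rewrite (compA (hopf_inv _ _)) by composable.
  rewrite (hopf_inv_natural_l (coev (TO X)) 1 (TO X ⊠ ∨ (TO X)) X) by typecheck. reassoc.
  rewrite (compA (id _ ⊗ TH (ev (TO X)))) by composable.
  rewrite (T2_natural_r (ev (TO X)) (TO X) (∨ (TO X) ⊠ TO X) 1) by typecheck. reassoc.
  rewrite (compA (id _ ⊗ T0)), T2_counit_r, comp_id_l by composable.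
  rewrite (compA (TH (id (TO X) ⊗ ev (TO X)))), <- T_comp, zig, T_id, comp_id_l by composable.
  rewrite compA, mu_hopf_inv_unit, <- tensor_comp, comp_id_l, comp_id_r by composable.
  rewrite (tensor_split_r T0 (eta X)), (proj2 is_hom_T0), (proj1 (is_hom_eta X)), tensor1l.
  reflexivity.
Qed.

Lemma unary_antipode_of_left_hopf : is_left_unary_antipode C D B unary_of_hopf.
Proof.
  split; [| split; [| split]].
  - apply is_hom_unary_of_hopf.
  - apply unary_of_hopf_natural.
  - apply unary_of_hopf_ev.
  - apply unary_of_hopf_coev.
Qed.

End HopfToUnary.

End LeftHopfMonads.

Theorem mainTheorem8 (C : SMCat) (D : LeftAutonomous C) (B : Bimonad C) :
  (has_left_unary_antipode C D B <-> has_left_binary_antipode C D B) /\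
  (has_left_binary_antipode C D B <-> is_left_hopf C B).
Proof.
  assert (unary_binary : has_left_unary_antipode C D B -> has_left_binary_antipode C D B)
    by (intros [s Hs]; exact (ex_intro _ _ (binary_antipode_of_unary C D B s Hs))).
  assert (binary_hopf : has_left_binary_antipode C D B -> is_left_hopf C B)
    by (intros [s Hs]; exact (left_hopf_of_binary_antipode C D B s Hs)).
  assert (hopf_unary : is_left_hopf C B -> has_left_unary_antipode C D B)
    by (intros Hh; exact (ex_intro _ _ (unary_antipode_of_left_hopf C D B Hh))).
  tauto.
Qed.
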